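(* (1) Let $S$ be a simple random walk and $\overline S=T(S)$. Then (i) for all $n\ge0$, $\sigma(\overline S_j,j\le n)\vee\sigma(S_1)=\sigma(S_j,j\le n+1)$; (ii) $S_1$ is independent of $\sigma(\overline S)$. (2) Let $\overline S=(\overline S_k)_{k\ge0}$ be a simple random walk. Then (i) (on a possibly enlarged probability space) there exists a simple random walk $S$ with $T(S)=\overline S$, and consequently, with $\overline Y_n:=\max_{k\le n}\overline S_k-\overline S_n$, one has $|\overline Y_n-|S_n||\le 2$ for all $n\in\mathbb N$; (ii) the set of simple random walks $S'$ with $T(S')=\overline S$ consists (almost surely) of exactly the two elements $S$ and $-S$, where $S$ is determined by $\overline S$ together with the additional independent sign $S_1$.
   Context: A simple random walk (SRW) $S=(S_n)_{n\ge0}$ has $S_0=0$ and i.i.d. steps $X_i=S_i-S_{i-1}$ uniform on $\{-1,1\}$. The Csaki–Vincze transformation $T$: given $S$, define $\tau_0=0$, $\tau_1=\min\{i>0:S_{i-1}S_{i+1}<0\}$, $\tau_{l+1}=\min\{i>\tau_l:S_{i-1}S_{i+1}<0\}$ for $l\ge1$; for $j\ge1$ set $\overline X_j=\sum_{l\ge0}(-1)^{l+1}X_1X_{j+1}1_{\{\tau_l+1\le j\le\tau_{l+1}\}}$, and $\overline S_0=0$, $\overline S_j=\overline X_1+\dots+\overline X_j$. Then $T(S):=\overline S$. It is known (Csaki–Vincze) that $\overline S=T(S)$ is a SRW satisfying $|\max_{k\le n}\overline S_k-\overline S_n-|S_n||\le2$ for all $n$, and that $\tau_l=\min\{n\ge0:\overline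 S_n=2l\}$ for all $l\ge1$. *)

From HB Require Import structures.
From mathcomp Require Import all_boot all_order all_algebra.
From mathcomp Require Import all_classical all_reals all_analysis.
Set Implicit Arguments. Unset Strict Implicit. Unset Printing Implicit Defensive.
Import Order.TTheory GRing.Theory Num.Theory.
Local Open Scope classical_set_scope.
Local Open Scope ring_scope.

Definition srw_path (s : nat -> int) : Prop :=
  s 0%N = 0 /\ forall i, `|s i.+1 - s i| = 1.

Definition step (s : nat -> int) (i : nat) : int := s i - s i.-1.

(* tau_{l+1} = min{ i > tau_l : S_{i-1} S_{i+1} < 0 }, None = +infinity
   (minimum of the empty set). *)
Definition next_tau (s : nat -> int) (t : nat) : option nat :=
  let p : pred nat := fun i => (t < i)%N && (s i.-1 * s i.+1 < 0) in
  match pselect (exists i, p i) with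
  | left h => Some (ex_minn h)
  | right _ => None
  end.

Fixpoint tau (s : nat -> int) (l : nat) : option nat :=
  match l with
  | 0%N => Some 0%N
  | l'.+1 => match tau s l' with Some t => next_tau s t | None => None end
  end.

Definition tau_ind (s : nat -> int) (l j : nat) : bool :=
  match tau s l, tau s l.+1 with
  | Some a, Some b => (a < j <= b)%N
  | Some a, None => (a < j)%N
  | None, _ => false
  end.

(* Xbar_j = sum_{l >= 0} (-1)^{l+1} X_1 X_{j+1} 1{tau_l+1 <= j <= tau_{l+1}},
   for j >= 1. Since tau_l >= l, only l < j can contribute, so the sum is
   taken over 0 <= l < j. *)
Definition Xbar (s : nat -> int) (j : nat) : int :=
  \sum_(0 <= l < j) ((-1) ^+ l.+1 * step s 1 * step s j.+1 * (tau_ind s l j)%:Z).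

Definition CV (s : nat -> int) : nat -> int :=
  fun j => \sum_(1 <= k < j.+1) Xbar s k.

Section Prob.
Context {d : measure_display} {Omega : measurableType d} {R : realType}.
Variable P : probability Omega R.
Local Open Scope ereal_scope.

Definition int_rv (Y : Omega -> int) : Prop :=
  forall B : set int, measurable (Y @^-1` B).

Definition mutually_indep (Y : nat -> Omega -> int) : Prop :=
  forall (J : seq nat) (B : nat -> set int), uniq J ->
    P [set w | forall j, j \in J -> B j (Y j w)]
    = \big[*%E/1%E]_(j <- J) P (Y j @^-1` B j).

Definition rademacher (Y : Omega -> int) : Prop :=
  int_rv Y /\ (forall w, Y w = 1%R \/ Y w = (-1)%R) /\
  P (Y @^-1` [set 1%R]) = (2^-1)%:E.

Definition SRW (S : nat -> Omega -> int) : Prop :=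
  [/\ forall w, S 0%N w = 0%R,
      forall n, int_rv (S n),
      forall i, rademacher (fun w => S i.+1 w - S i w)%R &
      mutually_indep (fun i w => S i.+1 w - S i w)%R].

Definition sigma_rv (Y : nat -> Omega -> int) (J : set nat) : set (set Omega) :=
  <<s [set A | exists j (B : set int), J j /\ A = Y j @^-1` B] >>.

Definition sjoin (F G : set (set Omega)) : set (set Omega) := <<s F `|` G >>.

Definition indep_rv_sigma (Y : Omega -> int) (F : set (set Omega)) : Prop :=
  forall (B : set int) (A : set Omega), F A ->
    P (Y @^-1` B `&` A) = P (Y @^-1` B) * P A.

End Prob.

Definition Tproc {Omega : Type} (S : nat -> Omega -> int) : nat -> Omega -> int :=
  fun n w => CV (fun k => S k w) n.

Definition Ybar {Omega : Type} (Sb : nat -> Omega -> int) (n : nat) (w : Omega) : int :=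
  (\big[Order.max/Sb 0%N w]_(k < n.+1) Sb k w - Sb n w)%R.

From HB Require Import structures.
From mathcomp Require Import all_boot all_order all_algebra.
From mathcomp Require Import all_classical all_reals all_analysis.
From mathcomp Require Import zify ring.
Set Implicit Arguments. Unset Strict Implicit. Unset Printing Implicit Defensive.
Import Order.TTheory GRing.Theory Num.Theory.
Local Open Scope classical_set_scope.
Local Open Scope ring_scope.

(* The map T only sees the zero crossings of S: if c_j counts the times 0 < i < j
   with S_(i-1) S_(i+1) < 0, then Xbar_j = (-1)^(c_j + 1) X_1 X_(j+1).  Hence T(S) is
   unchanged when S is replaced by -S, and S is recovered step by step from T(S)
   and S_1; conversely every path has the two preimages +-CVinv.  Telescoping
   |S_j| - |S_(j+1)| gives T(S)_n = 1 - |S_(n+1)| + 2 c_(n+1), and since T(S) reaches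
   2 c_(n+1) at the last crossing, max_(k <= n) T(S)_k - T(S)_n is within 2 of |S_n|.
   On the probabilistic side, a +-1 process has the increments of a simple random
   walk iff every sign pattern of its first m increments has probability 2^-m.
   Flipping all increments of S preserves this law and T(S); so every cylinder
   event of T(S) splits evenly between S_1 = 1 and S_1 = -1, and a pi-lambda
   argument gives the independence of S_1 and sigma(T(S)).  For an independent
   sign eps, the walk eps * CVinv(Sb) has uniform sign patterns, hence is a
   simple random walk with T-image Sb. *)

Definition crossing (s : nat -> int) (i : nat) : bool :=
  (0 < i)%N && (s i.-1 * s i.+1 < 0).

Definition crossings (s : nat -> int) (n : nat) : nat := count (crossing s) (iota 0 n).

Lemma crossingsS s n : crossings s n.+1 = (crossings s n + crossing s n)%N.
Proof. by rewrite /crossings -addn1 iotaD count_cat /= add0n addn0. Qed.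

Lemma crossings_cat s m n : (m <= n)%N ->
  crossings s n = (crossings s m + count (crossing s) (iota m (n - m)))%N.
Proof. by move=> mn; rewrite /crossings -{1}(subnKC mn) iotaD count_cat. Qed.

Lemma leq_crossings s m n : (m <= n)%N -> (crossings s m <= crossings s n)%N.
Proof. by move=> mn; rewrite (crossings_cat s mn) leq_addr. Qed.

Lemma crossings_ltn s j : (0 < j)%N -> (crossings s j < j)%N.
Proof.
move=> j0; rewrite (crossings_cat s j0) add0n.
by apply: leq_ltn_trans (count_size _ _) _; rewrite size_iota subn1 prednK.
Qed.

Lemma no_crossing_between s a b : (forall k, (a <= k < b)%N -> ~~ crossing s k) ->
  count (crossing s) (iota a (b - a)) = 0%N.
Proof.
move=> h; apply/eqP; rewrite -leqn0 leqNgt -has_count; apply/hasP => -[k].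
rewrite mem_iota => /andP[ak kb]; apply/negP/h; rewrite ak /=.
by case: (leqP a b) kb => [/subnKC -> //|/ltnW/eqP ->]; rewrite addn0 ltnNge ak.
Qed.

(* [tau s l] is the time of the [l]-th crossing, so that the crossing count is
   [l] exactly on the window [tau_l < j <= tau_(l+1)]. *)
Lemma tauP s l : match tau s l with
  | Some t => [/\ crossings s t.+1 = l, (l = 0 -> t = 0)%N & (0 < l -> crossing s t)%N]
  | None => forall n, (crossings s n < l)%N end.
Proof.
elim: l => [|l IH] /=; first by split.
case E: (tau s l) IH => [t|] IH; last by move=> n; exact: ltn_trans (IH n) _.
case: IH => Ht _ _; rewrite /next_tau; case: pselect => [h|h].
- case: ex_minnP => i /andP [ti pi] imin.
  have cri : crossing s i by rewrite /crossing pi andbT (leq_ltn_trans _ ti).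
  split => //; rewrite crossingsS (crossings_cat s ti) Ht cri no_crossing_between //.
    by rewrite addn0 addn1.
  move=> k /andP[tk ki]; apply/negP => /andP[_ pk].
  by have := imin k; rewrite tk pk => /(_ isT); rewrite leqNgt ki.
- move=> n; rewrite ltnS; case: (leqP n t.+1) => nt; first by rewrite -Ht leq_crossings.
  rewrite (crossings_cat s (ltnW nt)) Ht no_crossing_between ?addn0 //.
  by move=> k /andP[tk _]; apply/negP => /andP[_ pk]; apply: h; exists k; rewrite tk.
Qed.

Lemma crossing_time_window s a l j : crossings s a.+1 = l ->
  (l = 0 -> a = 0)%N -> (0 < l -> crossing s a)%N -> (0 < j)%N ->
  crossings s j = l -> (a < j)%N.
Proof.
move=> Ha Ha0 Hacr j0 Hj; rewrite ltnNge; apply/negP => ja.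
case: (posnP l) => [l0|lp].
  by move: ja; rewrite Ha0 // leqn0 => /eqP j00; rewrite j00 in j0.
move: Ha; rewrite crossingsS Hacr // => Ha.
by have := leq_crossings s ja; rewrite Hj; lia.
Qed.

Lemma tau_ind_crossings s l j : (0 < j)%N -> tau_ind s l j = (crossings s j == l).
Proof.
move=> j0; have H0 := tauP s l; have H1 := tauP s l.+1.
rewrite /tau_ind /=; move: H1 => /=.
case E: (tau s l) H0 => [a|] H0 /=; last by move=> _; apply/esym/negbTE; rewrite neq_ltn H0.
case: H0 => Ha Ha0 Hacr; case F: (next_tau s a) => [b|] H1.
- case: H1 => Hb _ /(_ isT) Hbcr.
  have Hb' : crossings s b = l by move: Hb; rewrite crossingsS Hbcr addn1 => -[].
  apply/idP/idP.
  + case/andP => aj jb; rewrite eqn_leq -{1}Hb' leq_crossings //=.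
    by rewrite -Ha leq_crossings.
  + move/eqP => Hj; rewrite (crossing_time_window Ha Ha0 Hacr j0 Hj) /= leqNgt.
    apply/negP => bj; have := leq_crossings s bj; rewrite Hj Hb; lia.
- apply/idP/idP.
  + by move=> aj; have := H1 j; have := leq_crossings s aj; rewrite Ha; lia.
  + by move/eqP; exact: crossing_time_window.
Qed.

(* Relative sign between the steps of [s] and those of [T(s)]; it flips at every crossing. *)
Definition cv_sign (s : nat -> int) (j : nat) : int := (-1) ^+ crossings s j * step s 1.

Lemma Xbar_cv_sign s j : (0 < j)%N -> Xbar s j = - cv_sign s j * step s j.+1.
Proof.
move=> j0; rewrite /Xbar; under eq_bigr do rewrite tau_ind_crossings //.
rewrite big_mkord (bigD1 (Ordinal (crossings_ltn s j0))) //= eqxx mulr1 big1 ?addr0.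
  by rewrite /cv_sign exprS mulN1r !mulNr.
move=> i /negbTE Hi; suff -> : (crossings s j == i) = false by rewrite mulr0.
by apply/negbTE; apply: contraFneq Hi => ci; apply/eqP/val_inj.
Qed.

Lemma CV0 s : CV s 0 = 0.
Proof. by rewrite /CV big_geq. Qed.

Lemma CVS s n : CV s n.+1 = CV s n + Xbar s n.+1.
Proof. by rewrite /CV big_nat_recr. Qed.

Lemma eq_crossings s s' n : (forall k, (k <= n)%N -> s k = s' k) ->
  crossings s n = crossings s' n.
Proof.
move=> H; apply: eq_in_count => i; rewrite mem_iota add0n => /andP[_ i_n].
by rewrite /crossing !H //; case: i i_n => //= i; lia.
Qed.

Lemma eq_Xbar s s' j : (0 < j)%N -> (forall k, (k <= j.+1)%N -> s k = s' k) ->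
  Xbar s j = Xbar s' j.
Proof.
move=> j0 H; rewrite !Xbar_cv_sign // /cv_sign (@eq_crossings s s' j); last first.
  by move=> k kj; apply: H; exact: leq_trans kj _.
by rewrite /step /= !H //; case: j j0 H => //= j _ H; lia.
Qed.

Lemma eq_CV s s' n : (forall k, (k <= n.+1)%N -> s k = s' k) -> CV s n = CV s' n.
Proof.
move=> H; apply: eq_big_nat => k /andP[k1 kn].
by apply: eq_Xbar => // i ik; apply: H; exact: leq_trans ik kn.
Qed.

Lemma CV_opp s : CV (fun k => - s k) = CV s.
Proof.
apply: funext => n; apply: eq_big_nat => k /andP[k1 _].
have cr_opp : crossings (fun k => - s k) k = crossings s k.
  by apply: eq_count => i; rewrite /crossing mulrNN.
by rewrite !Xbar_cv_sign // /cv_sign cr_opp /step -!opprD !mulrN !mulNr opprK.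
Qed.

(* Knowing [s_1], the increments of [s] are read off those of [T(s)] one by one. *)
Lemma CV_prefix_inj s s' n : s 0%N = s' 0%N -> s 1%N = s' 1%N -> s 1%N != s 0%N ->
  (forall k, (k <= n)%N -> CV s k = CV s' k) -> forall k, (k <= n.+1)%N -> s k = s' k.
Proof.
move=> h0 h1 h10; elim: n => [|n IH] H k kn; first by case: k kn => [|[|]].
have IH' := IH (fun k kn => H k (leq_trans kn (leqnSn n))).
rewrite leq_eqVlt in kn; case/orP: kn => [/eqP -> | kn]; last exact: IH'.
have eX : Xbar s n.+1 = Xbar s' n.+1.
  by apply: (@addrI _ (CV s n)); rewrite -CVS H // (H n (leqnSn n)) -CVS.
have e_sign : cv_sign s n.+1 = cv_sign s' n.+1.
  rewrite /cv_sign (@eq_crossings s s' n.+1); last by move=> i ik; apply: IH'.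
  by rewrite /step /= h0 h1.
have nz : cv_sign s' n.+1 != 0.
  by rewrite mulf_neq0 ?expf_neq0 ?oppr_eq0 ?oner_eq0 // /step /= -h0 -h1 subr_eq0.
move: eX; rewrite !Xbar_cv_sign // e_sign !mulNr => /oppr_inj/(mulfI nz) e.
by rewrite -(subrK (s n.+1) (s n.+2)) /step /= in e *; rewrite e IH' // subrK.
Qed.

Lemma CV_eq_srw_path s s' : srw_path s -> srw_path s' -> CV s' = CV s ->
  s' = s \/ s' = (fun n => - s n).
Proof.
move=> [s0 ss] [s'0 s's] hcv.
have agree u : u 0%N = s 0%N -> u 1%N = s 1%N -> CV u = CV s -> u = s.
  move=> u0 u1 hu; apply: funext => k; apply: (@CV_prefix_inj u s k) => // [|j _].
    by rewrite u1 u0; apply/eqP => h; have := ss 0%N; rewrite h subrr normr0.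
  by rewrite hu.
have := ss 0%N; have := s's 0%N; rewrite s0 s'0 !subr0 => h' h.
have [e|ne] := eqVneq (s' 1%N) (s 1%N); [left | right].
  by apply: agree; rewrite ?s'0 ?s0.
have hu : (fun n => - s' n) = s.
  by apply: agree; rewrite ?CV_opp // ?s'0 ?s0 ?oppr0 //; move/eqP: ne; lia.
by rewrite -hu; apply: funext => n; rewrite opprK.
Qed.

(* Inverse of [T] up to the sign of the first step: the state is
   (previous value, current value, current sign (-1)^(crossings so far)). *)
Fixpoint cv_inv_state (b : nat -> int) (j : nat) : int * int * int :=
  match j with
  | 0%N => (0, 1, 1)
  | j'.+1 => let: (a, c, p) := cv_inv_state b j' in
      let c' := c - p * (b j'.+1 - b j') in
      (c, c', if a * c' < 0 then - p else p)
  end.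

Definition CVinv (b : nat -> int) (n : nat) : int := (cv_inv_state b n).1.1.

Lemma CVinvS b n : CVinv b n.+1 = (cv_inv_state b n).1.2.
Proof. by rewrite /CVinv /=; case: (cv_inv_state b n) => [[a c] p]. Qed.

Lemma CVinv0 b : CVinv b 0 = 0. Proof. by []. Qed.
Lemma CVinv1 b : CVinv b 1 = 1. Proof. by []. Qed.

Lemma cv_inv_state_sign b n : (cv_inv_state b n).2 = (-1) ^+ crossings (CVinv b) n.+1.
Proof.
elim: n => [|n IH] //=; rewrite crossingsS exprD -IH /crossing /= (CVinvS b n.+1) /CVinv /=.
case: (cv_inv_state b n) => [[a c] p] /=.
by case: ifP => _; rewrite ?expr1 ?expr0 ?mulrN1 ?mulr1.
Qed.

Lemma CVinv_step b n :
  CVinv b n.+2 = CVinv b n.+1 - (-1) ^+ crossings (CVinv b) n.+1 * (b n.+1 - b n).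
Proof.
rewrite -cv_inv_state_sign CVinvS (CVinvS b n) /=.
by case: (cv_inv_state b n) => [[a c] p].
Qed.

Lemma eq_CVinv b b' n : (forall k, (k <= n)%N -> b k = b' k) -> CVinv b n = CVinv b' n.
Proof.
move=> H; congr (_.1.1); elim: n H => [|n IH] H //=.
by rewrite IH => [|k kn]; [rewrite !H // ltnW | apply: H; exact: leq_trans kn _].
Qed.

Lemma CV_CVinv b n : CV (CVinv b) n = b n - b 0%N.
Proof.
elim: n => [|n IH]; first by rewrite CV0 subrr.
rewrite CVS IH Xbar_cv_sign // /cv_sign /step CVinv_step CVinv1 CVinv0 subr0 mulr1.
rewrite /= (addrAC (CVinv b n.+1)) subrr add0r mulNr mulrN opprK mulrA.
by rewrite -expr2 sqrr_sign mul1r; lia.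
Qed.

Lemma CVinv_srw_path b : srw_path b -> srw_path (CVinv b) /\ CV (CVinv b) = b.
Proof.
case=> b0 bs; split; last by apply: funext => n; rewrite CV_CVinv b0 subr0.
split => // -[|i] //; rewrite CVinv_step addrAC subrr add0r normrN normrM.
by rewrite normrX normrN1 expr1n mul1r bs.
Qed.

Lemma cv_signS s j : cv_sign s j.+1 = (if crossing s j then - cv_sign s j else cv_sign s j).
Proof.
rewrite /cv_sign crossingsS exprD.
by case: (crossing s j); rewrite ?expr1 ?expr0 ?mulrN1 ?mulr1 ?mulNr.
Qed.

Lemma cv_sign_side s j : srw_path s -> (0 < j)%N ->
  [/\ (cv_sign s j = 1 \/ cv_sign s j = -1), 0 <= cv_sign s j * s j &
      0 <= cv_sign s j * s j.-1].
Proof.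
case=> s0 ss; elim: j => [|j IH] // _.
case: (posnP j) => [->|jp].
  rewrite /cv_sign (_ : crossings s 1 = 0%N) // /step /= s0 subr0.
  by have := ss 0%N; rewrite s0 subr0 => h; split; nia.
have [h1 h2 h3] := IH jp; rewrite cv_signS /crossing jp /=.
have e1 := ss j; have e2 := ss j.-1; rewrite prednK // in e2.
by case: ifP => hc; case: h1 => h1; rewrite h1 in h2 h3 *; split; nia.
Qed.

Lemma Xbar_abs s j : srw_path s -> (0 < j)%N ->
  Xbar s j = `|s j| - `|s j.+1| + 2 * (crossing s j : nat)%:Z.
Proof.
move=> hs jp; have [h1 h2 h3] := cv_sign_side hs jp.
have e1 := hs.2 j; have e2 := hs.2 j.-1; rewrite prednK // in e2.
rewrite Xbar_cv_sign // /step /crossing jp /=.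
by case hc: (s j.-1 * s j.+1 < 0); case: h1 => h1; rewrite h1 in h2 h3 *; nia.
Qed.

(* Telescoping [Xbar_abs] gives the discrete Tanaka formula. *)
Lemma CV_abs s n : srw_path s -> CV s n = 1 - `|s n.+1| + 2 * (crossings s n.+1)%:Z.
Proof.
move=> hs; elim: n => [|n IH].
  by rewrite CV0 mulr0 addr0; have := hs.2 0%N; rewrite hs.1 subr0; lia.
by rewrite CVS IH Xbar_abs // (crossingsS s n.+1); lia.
Qed.

Lemma crossing_abs s j : srw_path s -> crossing s j -> `|s j.+1| = 1.
Proof.
move=> hs /andP[jp hc]; have e1 := hs.2 j; have e2 := hs.2 j.-1.
by rewrite prednK // in e2; nia.
Qed.

Lemma CV_max_witness s n : srw_path s ->
  exists2 k, (k <= n)%N & 2 * (crossings s n.+1)%:Z <= CV s k.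
Proof.
move=> hs; elim: n => [|n [k kn IH]]; first by exists 0%N => //; rewrite CV0.
have hS := crossingsS s n.+1; case hc: (crossing s n.+1).
- by exists n.+1 => //; rewrite (CV_abs n.+1 hs) (crossing_abs hs hc) hS hc; lia.
- by exists k; [exact: leq_trans kn _ | rewrite hS hc addn0].
Qed.

Lemma CV_runmax_bounds s n : srw_path s ->
  2 * (crossings s n.+1)%:Z <= \big[Order.max/CV s 0%N]_(k < n.+1) CV s k
  <= 1 + 2 * (crossings s n.+1)%:Z.
Proof.
move=> hs; apply/andP; split.
  have [k kn hk] := CV_max_witness n hs.
  exact: le_trans hk (le_bigmax _ (fun k : 'I_n.+1 => CV s k) (@Ordinal n.+1 k kn)).
apply: bigmax_le => [|i _]; first by rewrite CV0; lia.
by rewrite (CV_abs i hs); have := leq_crossings s (ltn_ord i); lia.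
Qed.

Lemma CV_Ybar_bound s n : srw_path s ->
  `| (\big[Order.max/CV s 0%N]_(k < n.+1) CV s k - CV s n) - `|s n| | <= 2.
Proof.
by move=> hs; have := CV_runmax_bounds n hs; have := CV_abs n hs; have := hs.2 n; lia.
Qed.

Definition prefix_dep (m : nat) (F : (nat -> int) -> Prop) :=
  forall y y', (forall k, (k < m)%N -> y k = y' k) -> F y -> F y'.

Lemma prefix_depW m m' F : (m <= m')%N -> prefix_dep m F -> prefix_dep m' F.
Proof. by move=> mm' hF y y' hy; apply: hF => k km; apply: hy; exact: leq_trans km mm'. Qed.

Section cylinder.
Context d (T : measurableType d).

Lemma bigcup_int_measurable (A : int -> set T) : (forall v, measurable (A v)) ->
  measurable [set w | exists v, A v w].
Proof.
move=> mA; have -> : [set w | exists v, A v w] =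
    \bigcup_n A (Posz n) `|` \bigcup_n A (Negz n).
  apply/seteqP; split => [w [[n|n] h]|w [[n _ h]|[n _ h]]].
  - by left; exists n.
  - by right; exists n.
  - by exists (Posz n).
  - by exists (Negz n).
by apply: measurableU; apply: bigcupT_measurable.
Qed.

Lemma cylinder_measurable (Y : nat -> T -> int) m F :
  (forall k B, (k < m)%N -> measurable (Y k @^-1` B)) -> prefix_dep m F ->
  measurable [set w | F (fun k => Y k w)].
Proof.
elim: m F => [|m IH] F hY hF.
  have [h|h] := pselect (F (fun _ => 0)).
    suff -> : [set w | F (fun k => Y k w)] = setT by [].
    by apply/seteqP; split => // w _; apply: hF h.
  suff -> : [set w | F (fun k => Y k w)] = set0 by [].
  by apply/seteqP; split => // w /= hw; apply: h; apply: hF hw.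
pose Fv v y := F (fun k => if k == m then v else y k).
have -> : [set w | F (fun k => Y k w)] =
    [set w | exists v, (Y m @^-1` [set v] `&` [set w | Fv v (fun k => Y k w)]) w].
  apply/seteqP; split => [w h|w [v [/= <- h]]]; last by apply: hF h => k _; case: eqP => // ->.
  by exists (Y m w); split => //; apply: hF h => k _; case: eqP => // ->.
apply: bigcup_int_measurable => v; apply: measurableI; first exact: hY.
apply: IH => [k B km|y y' hyy']; first by apply: hY; exact: ltnW.
by apply: hF => k km1; case: eqP => // /eqP km; apply: hyy'; lia.
Qed.

End cylinder.

Lemma cylinder_sigma d (T : measurableType d) (C : set (set T)) (Y : nat -> T -> int) m F :
  (forall k B, (k < m)%N -> <<s C >> (Y k @^-1` B)) -> prefix_dep m F ->
  <<s C >> [set w | F (fun k => Y k w)].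
Proof. exact: (@cylinder_measurable _ (g_sigma_algebraType C)). Qed.

Definition pm1 (x : int) : bool := (x == 1) || (x == -1).

Lemma pm1_norm (v : int) : pm1 v = (`|v| == 1).
Proof. by rewrite /pm1; apply/idP/eqP => [/orP[]/eqP ->|h] //; apply/orP; lia. Qed.

Fixpoint signs (m : nat) : seq (seq int) :=
  if m is m'.+1 then [seq 1 :: t | t <- signs m'] ++ [seq -1 :: t | t <- signs m']
  else [:: [::]].

Lemma mem_signs m e : (e \in signs m) = (size e == m) && all pm1 e.
Proof.
elim: m e => [|m IH] [|x e] //=; rewrite mem_cat.
  by apply/negbTE; rewrite negb_or; apply/andP; split; apply/negP => /mapP [].
rewrite eqSS; apply/idP/idP => [/orP[]/mapP [t ht [-> ->]]|]; rewrite -?IH //.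
case/andP => he1 /andP[/orP[]/eqP -> ha]; apply/orP; [left|right];
  by apply/mapP; exists e => //; rewrite IH he1 ha.
Qed.

Lemma uniq_signs m : uniq (signs m).
Proof.
elim: m => [|m IH] //=; rewrite cat_uniq !map_inj_uniq // ?IH ?andbT; try by move=> x y [].
by apply/hasPn => x /mapP [t _ ->]; apply/mapP => -[u _ []]; lia.
Qed.

Lemma perm_signs_opp m : perm_eq (map (map -%R) (signs m)) (signs m).
Proof.
elim: m => [|m IH] //=; rewrite map_cat -!map_comp perm_catC.
have e1 : map (map -%R \o cons 1) (signs m) = map (cons (-1)) (map (map -%R) (signs m)).
  by rewrite -map_comp.
have e2 : map (map -%R \o cons (-1)) (signs m) = map (cons 1) (map (map -%R) (signs m)).
  by rewrite -map_comp; apply: eq_map => t /=; rewrite opprK.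
by rewrite e1 e2; apply: perm_cat; exact: perm_map.
Qed.

Lemma nth_signs m e i : e \in signs m -> (i < m)%N -> pm1 (nth 0 e i).
Proof. by rewrite mem_signs => /andP[/eqP <- /allP h] hi; apply/h/mem_nth. Qed.

Definition partial_sums (y : nat -> int) (k : nat) : int := \sum_(i < k) y i.

Lemma partial_sums0 y : partial_sums y 0 = 0.
Proof. exact: big_ord0. Qed.

Lemma partial_sums1 y : partial_sums y 1 = y 0%N.
Proof. exact: big_ord1. Qed.

Lemma partial_sums_step y i : partial_sums y i.+1 - partial_sums y i = y i.
Proof. by rewrite /partial_sums big_ord_recr /= addrAC subrr add0r. Qed.

Lemma eq_partial_sums y y' m : (forall i, (i < m)%N -> y i = y' i) ->
  forall k, (k <= m)%N -> partial_sums y k = partial_sums y' k.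
Proof. by move=> h k km; apply: eq_bigr => i _; apply/h/(leq_trans (ltn_ord i)). Qed.

Lemma partial_sums_opp y : partial_sums (fun i => - y i) = (fun k => - partial_sums y k).
Proof. by apply: funext => k; rewrite /partial_sums sumrN. Qed.

Lemma partial_sums_increments (s : nat -> int) : s 0%N = 0 ->
  partial_sums (fun i => s i.+1 - s i) = s.
Proof.
move=> s0; apply: funext; elim=> [|k IH]; first by rewrite partial_sums0 s0.
by have := partial_sums_step (fun i => s i.+1 - s i) k; rewrite IH; lia.
Qed.

Lemma eq_prefix_increments (u v : nat -> int) m : u 0%N = v 0%N ->
  (forall k, (k <= m)%N -> u k = v k) <-> (forall i, (i < m)%N -> u i.+1 - u i = v i.+1 - v i).
Proof.
move=> h0; split => h => [i im|]; first by rewrite !h // ltnW.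
elim=> [|k IH] // km; have := h k km; rewrite IH ?(ltnW km) // => e.
by rewrite -(subrK (v k) (u k.+1)) e subrK.
Qed.

Lemma measure_big_setU_seq d (T : measurableType d) (R : realType)
  (mu : {measure set T -> \bar R}) (I : eqType) (r : seq I) (Pr : pred I) (A : I -> set T) :
  uniq r -> (forall i, measurable (A i)) ->
  {in r &, forall i j, i != j -> A i `&` A j = set0} ->
  mu (\big[setU/set0]_(i <- r | Pr i) A i) = (\sum_(i <- r | Pr i) mu (A i))%E.
Proof.
elim: r => [|a r IH] uq mA hd; first by rewrite !big_nil measure0.
move: uq; rewrite cons_uniq => /andP[ar ur].
have sub i : i \in r -> i \in a :: r by move=> ir; rewrite inE ir orbT.
have hdr : {in r &, forall i j, i != j -> A i `&` A j = set0}.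
  by move=> i j ir jr; apply: hd; apply: sub.
rewrite !big_cons; case: ifP => pa; last exact: IH ur mA hdr.
have disj : A a `&` \big[setU/set0]_(i <- r | Pr i) A i = set0.
  rewrite big_seq_cond; elim/big_rec: _ => [|i U /andP[ir _] hU]; first by rewrite setI0.
  by rewrite setIUr hU setU0 (hd a i) ?mem_head ?sub //; apply: contraNneq ar => ->.
rewrite measureU //; first by congr (_ + _); exact: IH ur mA hdr.
by apply: bigsetU_measurable => i _; exact: mA.
Qed.

Definition half_pow {R : realType} (m : nat) : \bar R := ((2^-1 : R) ^+ m)%:E.

Section sign_processes.
Context d (Omega : measurableType d) (R : realType) (P : probability Omega R).

Definition increments (S : nat -> Omega -> int) (i : nat) (w : Omega) : int :=
  S i.+1 w - S i w.

Definition sign_atom (X : nat -> Omega -> int) (m : nat) (e : seq int) : set Omega :=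
  [set w | forall i, (i < m)%N -> X i w = nth 0 e i].

Definition pm1_process (X : nat -> Omega -> int) :=
  (forall i w, X i w = 1 \/ X i w = -1) /\ (forall i, int_rv (X i)).

Definition uniform_signs (X : nat -> Omega -> int) :=
  forall m e, e \in signs m -> P (sign_atom X m e) = half_pow m.

Lemma sign_atom_measurable X m e : pm1_process X -> measurable (sign_atom X m e).
Proof.
case=> _ hX.
apply: (@cylinder_measurable _ _ X m (fun y => forall i, (i < m)%N -> y i = nth 0 e i)).
  by move=> k B _; exact: hX.
by move=> y y' hy h i im; rewrite -hy // h.
Qed.

Lemma uniform_signs_law X m F : pm1_process X -> uniform_signs X -> prefix_dep m F ->
  P [set w | F (fun k => X k w)] = (\sum_(e <- signs m | `[< F (nth 0%R e) >]) half_pow m)%E.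
Proof.
move=> hX hu hF.
have -> : [set w | F (fun k => X k w)] =
    \big[setU/set0]_(e <- signs m | `[< F (nth 0 e) >]) sign_atom X m e.
  rewrite -bigcup_seq_cond; apply/seteqP; split => w /=.
    move=> hw; exists (mkseq (fun i => X i w) m); last by move=> i im; rewrite nth_mkseq.
    rewrite /= mem_signs size_mkseq eqxx /=; apply/andP; split.
      apply/allP => x /mapP [i _ ->].
      by rewrite /pm1; case: (hX.1 i w) => ->; rewrite eqxx ?orbT.
    by apply/asboolP; apply: hF hw => k km; rewrite nth_mkseq.
  by case=> e /andP[_ /asboolP hF'] ha; apply: hF hF' => k km; rewrite ha.
rewrite measure_big_setU_seq ?uniq_signs //; last first.
- move=> e e' he he' hne; apply/seteqP; split => // w [h h']; move/negP: hne; apply.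
  move: he he'; rewrite !mem_signs => /andP[/eqP se _] /andP[/eqP se' _].
  apply/eqP/(@eq_from_nth _ 0); first by rewrite se se'.
  by move=> i; rewrite se => im; rewrite -h // -h'.
- by move=> e; exact: sign_atom_measurable.
by rewrite big_seq_cond [RHS]big_seq_cond; apply: eq_bigr => e /andP[he _]; exact: hu.
Qed.

Lemma uniform_signs_law_eq X X' m F : pm1_process X -> uniform_signs X ->
  pm1_process X' -> uniform_signs X' -> prefix_dep m F ->
  P [set w | F (fun k => X k w)] = P [set w | F (fun k => X' k w)].
Proof.
move=> hX hu hX' hu' hF.
by rewrite (uniform_signs_law hX hu hF) (uniform_signs_law hX' hu' hF).
Qed.

Lemma rademacher_opp (Y : Omega -> int) : rademacher P Y ->
  P (Y @^-1` [set -1%R]) = (2^-1)%:E.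
Proof.
case=> hm [hv h1]; have -> : Y @^-1` [set -1%R] = ~` (Y @^-1` [set 1%R]).
  by apply/seteqP; split => w; rewrite /preimage /=; [move=> ->; lia | case: (hv w)].
rewrite probability_setC ?h1 -?EFinB; last exact: hm.
by congr (_%:E); field.
Qed.

Lemma SRW_pm1_process S : SRW P S -> pm1_process (increments S).
Proof.
case=> _ _ hr _; split => i; last by case: (hr i).
by move=> w; case: (hr i) => _ [h _]; exact: h.
Qed.

Lemma SRW_srw_path S w : SRW P S -> srw_path (fun k => S k w).
Proof.
move=> hS; have [h _] := SRW_pm1_process hS; case: hS => h0 _ _ _; split => // i.
by case: (h i w); rewrite /increments => ->.
Qed.

Lemma SRW_uniform_signs S : SRW P S -> uniform_signs (increments S).
Proof.
case=> _ _ hr hi m e he.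
have -> : sign_atom (increments S) m e =
    [set w | forall j, j \in iota 0 m -> [set nth 0%R e j] (increments S j w)].
  apply/seteqP; split => w /= h j => [|jm]; last by apply: h; rewrite mem_iota.
  by rewrite mem_iota => /h.
rewrite (hi (iota 0 m) (fun j => [set nth 0%R e j]) (iota_uniq 0 m)) big_seq.
rewrite (eq_bigr (fun _ => (2^-1 : R)%:E)); last first.
  move=> j; rewrite mem_iota add0n => hj.
  have /orP[/eqP ->|/eqP ->] := nth_signs he hj; first by case: (hr j) => _ [].
  exact: (rademacher_opp (hr j)).
rewrite -big_seq /half_pow; elim: m {he} => [|m IH]; first by rewrite big_nil.
by rewrite -addn1 iotaD big_cat /= big_seq1 IH exprD expr1 EFinM.
Qed.

Lemma SRW_of_uniform_signs (S Sb : nat -> Omega -> int) : SRW P Sb ->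
  (forall w, S 0%N w = 0%R) -> (forall n, int_rv (S n)) ->
  pm1_process (increments S) -> uniform_signs (increments S) -> SRW P S.
Proof.
move=> hSb h0 hm hp hu; have hpb := SRW_pm1_process hSb; have hub := SRW_uniform_signs hSb.
case: (hSb) => _ _ hr hi; split => // [i|J B uJ].
- split; [exact: hp.2 | split; first exact: hp.1].
  have hd : prefix_dep i.+1 (fun y => y i = 1%R) by move=> y y' hy <-; rewrite hy.
  have := uniform_signs_law_eq hp hu hpb hub hd; rewrite /increments => ->.
  by case: (hr i) => _ [].
pose m := (\max_(j <- J) j).+1.
have hJ j : j \in J -> (j < m)%N.
  by move=> jJ; rewrite ltnS; apply: (@leq_bigmax_seq _ _ _ (fun j => j)).
have hd : prefix_dep m (fun y => forall j, j \in J -> B j (y j)).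
  by move=> y y' hy h j jJ; rewrite -hy ?hJ //; apply: h.
have := uniform_signs_law_eq hp hu hpb hub hd; rewrite /increments => ->.
rewrite (hi J B uJ) big_seq [in RHS]big_seq; apply: eq_bigr => j jJ.
have hd' : prefix_dep j.+1 (fun y => B j (y j)) by move=> y y' hy; rewrite hy.
exact: (uniform_signs_law_eq hpb hub hp hu hd').
Qed.

End sign_processes.

Section walk_and_transform.
Context d (Omega : measurableType d) (R : realType) (P : probability Omega R).
Variable S : nat -> Omega -> int.
Hypothesis hS : SRW P S.

Let path_S w : srw_path (fun k => S k w) := SRW_srw_path w hS.

Lemma Tproc_int_rv k : int_rv (Tproc S k).
Proof.
case: hS => _ hm _ _ B; apply: (@cylinder_measurable _ _ S k.+2 (fun y => B (CV y k))).
  by move=> j B' _; exact: hm.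
by move=> y y' hy; rewrite (@eq_CV y y' k) // => j jk; apply: hy.
Qed.

Lemma Tproc_in_sigma n :
  sigma_rv (Tproc S) [set j | (j <= n)%N] `<=` sigma_rv S [set j | (j <= n.+1)%N].
Proof.
apply: smallest_sub; first exact: smallest_sigma_algebra.
move=> _ [j [B [/= jn ->]]]; apply: (@cylinder_sigma _ _ _ S n.+2 (fun y => B (CV y j))).
  by move=> k B' kn; apply: sub_sigma_algebra; exists k, B'.
by move=> y y' hy; rewrite (@eq_CV y y' j) // => k kj; apply: hy; rewrite ltnS (leq_trans kj).
Qed.

(* [S_j] is recovered from [S_1] and [T(S)_0, ..., T(S)_(j-1)] by [CV_prefix_inj]. *)
Lemma S_in_join n : sigma_rv S [set j | (j <= n.+1)%N] `<=`
  sjoin (sigma_rv (Tproc S) [set j | (j <= n)%N]) (sigma_rv (fun _ => S 1%N) setT).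
Proof.
apply: smallest_sub; first exact: smallest_sigma_algebra.
move=> _ [j [B [/= jn ->]]].
pose Y k := if k is k'.+1 then Tproc S k' else S 1%N.
pose F y := exists s, [/\ srw_path s, s 1%N = y 0%N,
  (forall k, (k <= n)%N -> CV s k = y k.+1) & B (s j)].
have -> : S j @^-1` B = [set w | F (fun k => Y k w)].
  apply/seteqP; split => w /= => [hb|[s [hs s1 hcv hb]]]; first by exists (fun k => S k w).
  rewrite -(@CV_prefix_inj s (fun k => S k w) n) //; first by rewrite hs.1 (path_S w).1.
  by rewrite hs.1; apply/eqP => h; have := hs.2 0%N; rewrite h hs.1 subrr normr0.
apply: (@cylinder_sigma _ _ _ Y n.+2) => [[|k] B' kn|y y' hy [s [h1 h2 h3 h4]]].
- by apply: sub_sigma_algebra; right; apply: sub_sigma_algebra; exists 0%N, B'.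
- by apply: sub_sigma_algebra; left; apply: sub_sigma_algebra; exists k, B'.
- by exists s; split => // [|k kn]; [rewrite h2 | rewrite h3 //]; apply: hy.
Qed.

Lemma Tproc_join_first_step n :
  sjoin (sigma_rv (Tproc S) [set j | (j <= n)%N]) (sigma_rv (fun _ => S 1%N) setT)
  = sigma_rv S [set j | (j <= n.+1)%N].
Proof.
apply/seteqP; split; last exact: S_in_join.
apply: smallest_sub; first exact: smallest_sigma_algebra.
move=> A [|]; last first.
  apply: smallest_sub; first exact: smallest_sigma_algebra.
  by move=> _ [j [B [_ ->]]]; apply: sub_sigma_algebra; exists 1%N, B.
exact: Tproc_in_sigma.
Qed.

Let X1_eq (c : int) := [set w | increments S 0 w = c].
Let cyl (F : (nat -> int) -> Prop) := [set w | F (fun k => Tproc S k w)].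

Lemma Tproc_cylinder_measurable m F : prefix_dep m F -> measurable (cyl F).
Proof. by apply: cylinder_measurable => k B _; exact: Tproc_int_rv. Qed.

Lemma Tproc_first_step_law m F c : prefix_dep m F ->
  P (cyl F `&` X1_eq c) = (\sum_(e <- signs m.+1 |
    `[< F (CV (partial_sums (nth 0%R e))) /\ nth 0%R e 0%N = c >]) half_pow m.+1)%E.
Proof.
move=> hF; pose G y := F (CV (partial_sums y)) /\ y 0%N = c.
have hG : prefix_dep m.+1 G.
  move=> y y' hy [h1 h2]; split; last by rewrite -hy.
  apply: hF h1 => k km; apply: eq_CV => i ik; apply: (eq_partial_sums hy).
  exact: leq_trans ik (leqW km).
have -> : cyl F `&` X1_eq c = [set w | G (fun k => increments S k w)].
  apply/seteqP; split => w; rewrite /G /= /increments partial_sums_increments //;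
    by case: hS.
exact: (uniform_signs_law (SRW_pm1_process hS) (SRW_uniform_signs hS) hG).
Qed.

(* Flipping every increment of [S] preserves its law and leaves [T(S)] unchanged. *)
Lemma Tproc_first_step_sym m F : prefix_dep m F ->
  P (cyl F `&` X1_eq 1) = P (cyl F `&` X1_eq (-1)).
Proof.
move=> hF; rewrite !(Tproc_first_step_law _ hF).
rewrite -(perm_big _ (perm_signs_opp m.+1)) big_map; apply: eq_bigl => e.
have -> : nth 0 (map -%R e) = (fun i => - nth 0 e i).
  by apply: funext => i; elim: e i => [|x e IH] [|i] //=; rewrite oppr0.
rewrite partial_sums_opp CV_opp.
apply/idP/idP => /asboolP [h1 /= h2]; apply/asboolP; split => //.
  by rewrite -h2 opprK.
by rewrite h2 opprK.
Qed.

Lemma Tproc_first_step_half m F c : prefix_dep m F -> c = 1 \/ c = -1 ->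
  P (cyl F `&` X1_eq c) = ((2^-1)%:E * P (cyl F))%E.
Proof.
move=> hF hc; have [hv hrv] := SRW_pm1_process hS.
have mX c' : measurable (X1_eq c') by exact: (hrv 0%N [set c']).
have mA := Tproc_cylinder_measurable hF.
have split_A : P (cyl F) = (P (cyl F `&` X1_eq 1) + P (cyl F `&` X1_eq (-1)))%E.
  rewrite -measureU; try exact: measurableI.
    congr (P _); apply/seteqP; split => [w hw|w [] []//].
    by case: (hv 0%N w) => h; [left|right].
  by apply/seteqP; split => // w [[_ h1] [_ h2]]; move: h1 h2; rewrite /X1_eq /= => -> /eqP.
have fin c' : P (cyl F `&` X1_eq c') \is a fin_num by apply/fin_num_measure/measurableI.
rewrite split_A (Tproc_first_step_sym hF) -(fineK (fin (-1))) -EFinD -EFinM.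
by case: hc => ->; rewrite -?(Tproc_first_step_sym hF) -(fineK (fin _)); congr (_%:E); field.
Qed.

Lemma Tproc_cylinder_indep m F (B : set int) : prefix_dep m F ->
  P (cyl F `&` (S 1%N @^-1` B)) = (P (S 1%N @^-1` B) * P (cyl F))%E.
Proof.
move=> hF; have [hv _] := SRW_pm1_process hS.
have S1 w : S 1%N w = increments S 0 w by rewrite /increments (path_S w).1 subr0.
have half c : c = 1 \/ c = -1 -> P (X1_eq c) = (2^-1)%:E.
  case: hS => _ _ hr _ [] ->; first by case: (hr 0%N) => _ [].
  exact: (rademacher_opp (hr 0%N)).
have [b1|b1] := pselect (B 1); have [b2|b2] := pselect (B (-1)).
- have -> : S 1%N @^-1` B = setT.
    by apply/seteqP; split => // w _; rewrite /preimage /= S1; case: (hv 0%N w) => ->.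
  by rewrite setIT probability_setT mul1e.
- have -> : S 1%N @^-1` B = X1_eq 1.
    apply/seteqP; split => w; rewrite /preimage /X1_eq /= S1; last by move=> ->.
    by case: (hv 0%N w) => ->.
  by rewrite (Tproc_first_step_half hF (or_introl erefl)) half //; left.
- have -> : S 1%N @^-1` B = X1_eq (-1).
    apply/seteqP; split => w; rewrite /preimage /X1_eq /= S1; last by move=> ->.
    by case: (hv 0%N w) => ->.
  by rewrite (Tproc_first_step_half hF (or_intror erefl)) half //; right.
- have -> : S 1%N @^-1` B = set0.
    by apply/seteqP; split => // w; rewrite /preimage /= S1; case: (hv 0%N w) => ->.
  by rewrite setI0 measure0 mul0e.
Qed.

(* Cylinder events of [T(S)] form a pi-system generating [sigma(T(S))], on which
   [A |-> P (A `&` C)] and [A |-> P C * P A] agree. *)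
Lemma Tproc_indep_first_step : indep_rv_sigma P (S 1%N) (sigma_rv (Tproc S) setT).
Proof.
move=> B A hA; set C := S 1%N @^-1` B.
have mC : measurable C by case: hS => _ hm _ _; exact: hm.
pose Cyl := [set A : set Omega | exists m F, prefix_dep m F /\ A = cyl F].
have CylM : Cyl `<=` measurable.
  by move=> _ [m [F [hF ->]]]; exact: Tproc_cylinder_measurable hF.
have CylT : Cyl setT by exists 0%N, (fun _ => True).
have CylI : setI_closed Cyl.
  move=> _ _ [m1 [F1 [h1 ->]]] [m2 [F2 [h2 ->]]].
  exists (maxn m1 m2), (fun y => F1 y /\ F2 y); split => // y y' hy [a b].
  split; first exact: (prefix_depW (leq_maxl _ _) h1 hy a).
  exact: (prefix_depW (leq_maxr _ _) h2 hy b).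
have hA' : <<s Cyl >> A.
  move: A hA; apply: smallest_sub; first exact: smallest_sigma_algebra.
  move=> _ [j [B' [_ ->]]]; apply: sub_sigma_algebra.
  by exists j.+1, (fun y => B' (y j)); split => // y y' hy; rewrite hy.
have hfin : P C \is a fin_num by exact: fin_num_measure.
pose r := NngNum (fine_ge0 (measure_ge0 P C)).
have agree : forall A, Cyl A -> mrestr P mC A = mscale r P A.
  by move=> _ [m [F [hF ->]]]; rewrite /mrestr /mscale /= fineK // (Tproc_cylinder_indep B hF).
have fin_restr : forall k : nat, (mrestr P mC setT < +oo)%E.
  move=> _; rewrite /mrestr setTI; apply: (le_lt_trans (probability_le1 P mC)); exact: ltry.
have := @g_sigma_algebra_measure_unique _ _ _ Cyl CylM (fun _ => setT) (fun _ => CylT)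
  (bigcup_const _ _) (mrestr P mC) (mscale r P) CylI agree fin_restr A hA'.
have ne : [set: nat] !=set0 by exists 0%N.
move=> /(_ ne) h; have h' : P (A `&` C) = ((fine (P C))%:E * P A)%E := h.
by rewrite setIC h' fineK.
Qed.

End walk_and_transform.

Definition lift_walk {Omega : Type} (Sb : nat -> Omega -> int) (eps : Omega -> int)
  (n : nat) (w : Omega) : int := eps w * CVinv (fun k => Sb k w) n.

Lemma lift_walk_path (Sb : nat -> int) (e : int) : srw_path Sb -> (e = 1 \/ e = -1) ->
  [/\ srw_path (fun k => e * CVinv Sb k), e * CVinv Sb 1 = e &
      CV (fun k => e * CVinv Sb k) = Sb].
Proof.
move=> hb he; have [[t0 ts] hc] := CVinv_srw_path hb.
split; [split | by rewrite CVinv1 mulr1 |].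
- by rewrite t0 mulr0.
- by move=> i; rewrite -mulrBr normrM ts; case: he => ->; rewrite ?normrN normr1.
case: he => ->.
  by rewrite (_ : (fun k => 1 * _) = CVinv Sb) //; apply: funext => k; rewrite mul1r.
rewrite (_ : (fun k => -1 * _) = (fun k => - CVinv Sb k)) ?CV_opp //.
by apply: funext => k; rewrite mulN1r.
Qed.

Section lifting.
Context d (Omega : measurableType d) (R : realType) (P : probability Omega R).
Variables (Sb : nat -> Omega -> int) (eps : Omega -> int).
Hypotheses (hSb : SRW P Sb) (heps : rademacher P eps)
  (hindep : indep_rv_sigma P eps (sigma_rv Sb setT)).

Let S := lift_walk Sb eps.

Let eps_pm1 w : eps w = 1 \/ eps w = -1. Proof. by case: heps => _ []. Qed.

Let S_path w := lift_walk_path (SRW_srw_path w hSb) (eps_pm1 w).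

Let eps_Sb (k : nat) : Omega -> int := if k is k'.+1 then Sb k' else eps.

Lemma lift_walk_cylinder m F : prefix_dep m.+1 F ->
  measurable [set w | F (fun k => eps_Sb k w)].
Proof.
apply: cylinder_measurable.
by case=> [|k] B _ /=; [case: heps | case: hSb => _ hm _ _; exact: hm].
Qed.

Lemma lift_walk_int_rv n : int_rv (S n).
Proof.
move=> B; apply: (@lift_walk_cylinder n.+1 (fun y => B (y 0%N * CVinv (fun k => y k.+1) n))).
move=> y y' hy; rewrite hy // (@eq_CVinv _ (fun k => y' k.+1) n) // => k kn.
by apply: hy; rewrite ltnS ltnS.
Qed.

Lemma lift_walk_increments_int_rv i : int_rv (increments S i).
Proof.
move=> B; apply: (@lift_walk_cylinder i.+2 (fun y =>
  B (y 0%N * CVinv (fun k => y k.+1) i.+1 - y 0%N * CVinv (fun k => y k.+1) i))).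
move=> y y' hy; rewrite hy // !(@eq_CVinv (fun k => y k.+1) (fun k => y' k.+1)) // => k ki.
  by apply: hy; rewrite !ltnS (leq_trans ki).
by apply: hy; rewrite !ltnS.
Qed.

Lemma lift_walk_atom m e : e \in signs m.+1 ->
  sign_atom (increments S) m.+1 e = eps @^-1` [set nth 0 e 0%N] `&`
    [set w | forall k, (k <= m)%N -> Sb k w = CV (partial_sums (nth 0 e)) k].
Proof.
move=> he; pose s := partial_sums (nth 0 e).
have hs0 : s 0%N = 0 by exact: partial_sums0.
have hs1 : s 1%N = nth 0 e 0 by exact: partial_sums1.
apply/seteqP; split => w; have [hp S1 hc] := S_path w.
- move=> ha; have hk : forall k, (k <= m.+1)%N -> S k w = s k.
    apply/eq_prefix_increments; first by rewrite hs0; exact: hp.1.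
    by move=> i im; rewrite /s partial_sums_step; exact: ha.
  split; first by rewrite /= -S1 -hs1; exact: hk.
  move=> k km /=; rewrite -[Sb k w]/((fun k => Sb k w) k) -hc.
  by apply: eq_CV => i ik; apply: hk; exact: leq_trans ik (km : (k.+1 <= m.+1)%N).
- case=> /= e0 hD.
  have hk : forall k, (k <= m.+1)%N -> s k = S k w.
    apply: CV_prefix_inj => [|||j jm]; first by rewrite hs0; symmetry; exact: hp.1.
    + by rewrite hs1 -e0 -S1.
    + by have := nth_signs he (ltn0Sn m); rewrite hs1 hs0 pm1_norm => /eqP; lia.
    + by rewrite -hD // -[Sb j w]/((fun k => Sb k w) j) -hc.
  by move=> i im; rewrite /increments -!hk ?(ltnW im) // /s partial_sums_step.
Qed.

Lemma CV_sign_pattern m e : e \in signs m.+1 ->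
  mkseq (fun i => CV (partial_sums (nth 0 e)) i.+1 - CV (partial_sums (nth 0 e)) i) m
    \in signs m.
Proof.
move=> he; rewrite mem_signs size_mkseq eqxx /=.
apply/allP => v /mapP [i]; rewrite mem_iota add0n => /andP[_ im] ->.
rewrite pm1_norm CVS addrC addKr Xbar_cv_sign // /cv_sign /step /= partial_sums0 subr0.
rewrite partial_sums1 partial_sums_step normrM normrN normrM normrX normrN1 expr1n mul1r.
have := nth_signs he (ltn0Sn m); have := nth_signs he (im : (i.+1 < m.+1)%N).
by rewrite !pm1_norm => /eqP -> /eqP ->.
Qed.

Lemma lift_walk_uniform_signs : uniform_signs P (increments S).
Proof.
move=> [|m] e he.
  rewrite (_ : sign_atom _ 0 e = setT) ?probability_setT //.
  by apply/seteqP; split => // w _ i; rewrite ltn0.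
set c := CV (partial_sums (nth 0 e)).
have c0 : c 0%N = 0 by exact: CV0.
have hD : [set w | forall k, (k <= m)%N -> Sb k w = c k] =
    sign_atom (increments Sb) m (mkseq (fun i => c i.+1 - c i) m).
  apply/seteqP; split => w h => [i im|]; first by rewrite nth_mkseq // /increments !h // ltnW.
  apply/eq_prefix_increments; first by case: hSb => ->.
  by move=> i im; have := h i im; rewrite /increments nth_mkseq.
have hDsig : sigma_rv Sb setT [set w | forall k, (k <= m)%N -> Sb k w = c k].
  apply: (@cylinder_sigma _ _ _ Sb m.+1 (fun y => forall k, (k <= m)%N -> y k = c k))
    => [k B _|y y' hy h k km].
    by apply: sub_sigma_algebra; exists k, B.
  by rewrite -hy ?ltnS // h.
rewrite lift_walk_atom // hindep // hD (SRW_uniform_signs hSb (CV_sign_pattern he)).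
case/orP: (nth_signs he (ltn0Sn m)) => /eqP ->.
- by case: heps => _ [_ ->]; rewrite /half_pow exprS EFinM.
- by rewrite rademacher_opp // /half_pow exprS EFinM.
Qed.

Lemma lift_walk_SRW : SRW P S.
Proof.
apply: (SRW_of_uniform_signs hSb) => [w|n|| ]; last exact: lift_walk_uniform_signs.
- by rewrite /S /lift_walk CVinv0 mulr0.
- exact: lift_walk_int_rv.
split; last exact: lift_walk_increments_int_rv.
move=> i w; have [[_ hp] _ _] := S_path w.
by have := hp i; rewrite /increments /S /lift_walk; lia.
Qed.

Lemma lift_walk_spec w :
  [/\ S 1%N w = eps w, (forall n, Tproc S n w = Sb n w),
      (forall n, `| Ybar Sb n w - `|S n w| | <= 2) &
      (forall s', srw_path s' ->
        (CV s' = (fun n => Sb n w) <-> (s' = (fun n => S n w) \/ s' = (fun n => - S n w))))].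
Proof.
have [hp h1 hc] := S_path w; split => // [n|n|s' hs'].
- by rewrite /Tproc hc.
- by have := CV_Ybar_bound n hp; rewrite hc.
split => [hcv|]; first by apply: CV_eq_srw_path => //; rewrite hcv hc.
by case=> ->; rewrite ?CV_opp hc.
Qed.

End lifting.

Theorem corollary2 (d : measure_display) (Omega : measurableType d)
  (R : realType) (P : probability Omega R) :
  (forall S : nat -> Omega -> int, SRW P S ->
     (forall n : nat,
        sjoin (sigma_rv (Tproc S) [set j | (j <= n)%N])
              (sigma_rv (fun _ => S 1%N) setT)
        = sigma_rv S [set j | (j <= n.+1)%N])
     /\ indep_rv_sigma P (S 1%N) (sigma_rv (Tproc S) setT))
  /\
  (forall (Sb : nat -> Omega -> int) (eps : Omega -> int),
     SRW P Sb -> rademacher P eps -> indep_rv_sigma P eps (sigma_rv Sb setT) ->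
     exists S : nat -> Omega -> int,
       SRW P S /\
       {ae P, forall w,
          [/\ S 1%N w = eps w,
              (forall n, Tproc S n w = Sb n w),
              (forall n, `| Ybar Sb n w - `|S n w| | <= 2) &
              (forall s' : nat -> int, srw_path s' ->
                 (CV s' = (fun n => Sb n w) <->
                  (s' = (fun n => S n w) \/ s' = (fun n => - S n w))))]}).
Proof.
split=> [S hS | Sb eps hSb heps hindep].
  by split=> [n|]; [exact: Tproc_join_first_step hS n | exact: Tproc_indep_first_step hS].
exists (lift_walk Sb eps); split; first exact: lift_walk_SRW hSb heps hindep.
by apply: aeW => w; exact: lift_walk_spec hSb heps w.
Qed.
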